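(* Let $\{\alpha_t\}_{t\in\mathbb Z_{\ge0}}$ be a sequence of continuous, weakly monotonically increasing functions $\alpha_t\colon\mathbb R_{\ge0}\to\mathbb R_{\ge0}$ with $\alpha_t^{-1}(0)=\{0\}$ for all $t$. Then there is a non-negative $\alpha\in C^\infty(\mathbb R)$ with $\alpha^{-1}(0)=\mathbb R_{\le0}$ such that for all $t,k\in\mathbb Z_{\ge0}$, $\lim_{x\to0,\,x>0}\frac{\alpha(x)}{(\alpha_t(x))^k}=0$. *)

From Stdlib Require Import Reals.
From Coquelicot Require Export Coquelicot.
Export Reals.
Open Scope R_scope.

Definition smooth (f : R -> R) : Prop :=
  forall (n : nat) (x : R), ex_derive_n f n x.

Definition continuous_on_nonneg (g : R -> R) : Prop :=
  forall x : R, 0 <= x ->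
    filterlim g (within (fun y => 0 <= y) (locally x)) (locally (g x)).

From Stdlib Require Import Reals Lra Lia.
From Coquelicot Require Import Coquelicot.
Open Scope R_scope.

(* The function is a series  sum_n c_n psi (x - 1/(n+1))  of translates of the flat function
   psi x = exp (-1/x) (x > 0), psi x = 0 (x <= 0).  Every derivative of psi has the form
   p (1/x) exp (-1/x) with p a polynomial, hence is bounded, so for c_n <= 2^-n the series can
   be differentiated termwise any number of times.  Take
   c_n = 2^-n (1/(n+1)) m_n^n  with  m_n <= min (1, alpha_t (1/(n+1)))  for all t <= n.
   For 0 < x < 1/(t+k+1) only the summands with 1/(n+1) < x, hence n > t + k, are nonzero, and
   by monotonicity each of them is at most 2^-n x alpha_t(x)^k; so alpha x <= 2 x alpha_t(x)^k. *)

Inductive is_poly : (R -> R) -> Prop :=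
  | is_poly_const (c : R) : is_poly (fun _ => c)
  | is_poly_id : is_poly (fun y => y)
  | is_poly_add p q : is_poly p -> is_poly q -> is_poly (fun y => p y + q y)
  | is_poly_mul p q : is_poly p -> is_poly q -> is_poly (fun y => p y * q y).

Lemma is_poly_derive p :
  is_poly p -> exists p', is_poly p' /\ forall y, is_derive p y (p' y).
Proof.
induction 1 as [c| |p q _ [p' [Hp' Dp]] _ [q' [Hq' Dq]]
               |p q Hp [p' [Hp' Dp]] Hq [q' [Hq' Dq]]].
- exists (fun _ => 0); split; [constructor|]. intros y; apply (is_derive_const c).
- exists (fun _ => 1); split; [constructor|]. intros y; exact (@is_derive_id R_AbsRing y).
- exists (fun y => p' y + q' y); split; [now constructor|].
  intros y; now apply (is_derive_plus p q).
- exists (fun y => p' y * q y + p y * q' y); split.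
  + now apply is_poly_add; apply is_poly_mul.
  + intros y; apply (is_derive_mult p q); auto. exact Rmult_comm.
Qed.

Lemma is_poly_bound p :
  is_poly p -> exists C N, 0 <= C /\ forall y, 0 <= y -> Rabs (p y) <= C * (1 + y) ^ N.
Proof.
induction 1 as [c| |p q _ [C1 [N1 [HC1 B1]]] _ [C2 [N2 [HC2 B2]]]
               |p q _ [C1 [N1 [HC1 B1]]] _ [C2 [N2 [HC2 B2]]]].
- exists (Rabs c), 0%nat; split; [apply Rabs_pos|]. intros y _; simpl; lra.
- exists 1, 1%nat; split; [lra|]. intros y Hy; simpl; rewrite Rabs_pos_eq; lra.
- exists (C1 + C2), (N1 + N2)%nat; split; [lra|]. intros y Hy.
  specialize (B1 y Hy); specialize (B2 y Hy).
  assert ((1 + y) ^ N1 <= (1 + y) ^ (N1 + N2)) by (apply Rle_pow; [lra|lia]).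
  assert ((1 + y) ^ N2 <= (1 + y) ^ (N1 + N2)) by (apply Rle_pow; [lra|lia]).
  pose proof (Rabs_triang (p y) (q y)). nra.
- exists (C1 * C2), (N1 + N2)%nat; split; [nra|]. intros y Hy.
  specialize (B1 y Hy); specialize (B2 y Hy).
  rewrite Rabs_mult, pow_add.
  replace (C1 * C2 * ((1 + y) ^ N1 * (1 + y) ^ N2))
    with ((C1 * (1 + y) ^ N1) * (C2 * (1 + y) ^ N2)) by ring.
  apply Rmult_le_compat; auto; apply Rabs_pos.
Qed.

Lemma pow_le_fact_exp M z : 0 <= z -> z ^ M <= INR (Factorial.fact M) * exp z.
Proof.
intros Hz.
assert (Hfact : 0 < INR (Factorial.fact M)) by apply INR_fact_lt_0.
assert (Hterm : z ^ M / INR (Factorial.fact M) <= exp z).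
{ eapply Rle_trans; [|apply (exp_ge_taylor z M Hz)].
  destruct M as [|M]; [simpl; lra|]. rewrite tech5.
  assert (0 <= sum_f_R0 (fun k => z ^ k / INR (Factorial.fact k)) M); [|lra].
  apply cond_pos_sum; intros k.
  apply Rdiv_le_0_compat; [now apply pow_le|apply INR_fact_lt_0]. }
replace (z ^ M) with (INR (Factorial.fact M) * (z ^ M / INR (Factorial.fact M)))
  by (field; lra).
apply Rmult_le_compat_l; lra.
Qed.

Lemma poly_exp_decay p :
  is_poly p -> exists K, forall y, 0 <= y -> Rabs (p y) * exp (- y) * (1 + y) ^ 2 <= K.
Proof.
intros Hp; destruct (is_poly_bound p Hp) as [C [N [HC Bp]]].
exists (C * INR (Factorial.fact (N + 2)) * exp 1); intros y Hy.
assert (Hexp : (1 + y) ^ (N + 2) * exp (- y) <= INR (Factorial.fact (N + 2)) * exp 1).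
{ pose proof (pow_le_fact_exp (N + 2) (1 + y) ltac:(lra)) as H.
  rewrite exp_plus in H. pose proof (exp_pos y). rewrite exp_Ropp.
  apply Rmult_le_reg_r with (exp y); [lra|].
  rewrite Rmult_assoc, Rinv_l; lra. }
rewrite pow_add in Hexp.
pose proof (Bp y Hy). pose proof (exp_pos (- y)).
assert (0 <= (1 + y) ^ 2) by (apply pow_le; lra).
apply Rle_trans with (C * (1 + y) ^ N * exp (- y) * (1 + y) ^ 2).
- apply Rmult_le_compat_r; [lra|]. apply Rmult_le_compat_r; lra.
- replace (C * (1 + y) ^ N * exp (- y) * (1 + y) ^ 2)
    with (C * ((1 + y) ^ N * (1 + y) ^ 2 * exp (- y))) by ring.
  rewrite (Rmult_assoc C (INR _)). apply Rmult_le_compat_l; lra.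
Qed.

Definition flat (p : R -> R) (x : R) : R :=
  if Rle_dec x 0 then 0 else p (/ x) * exp (- / x).

Lemma flat_bound p :
  is_poly p -> exists K, forall x, Rabs (flat p x) <= K /\ Rabs (flat p x) <= K * x ^ 2.
Proof.
intros Hp; destruct (poly_exp_decay p Hp) as [K HK].
assert (HK0 : 0 <= K).
{ specialize (HK 0 (Rle_refl 0)). pose proof (Rabs_pos (p 0)). pose proof (exp_pos (- 0)).
  simpl in HK. nra. }
exists K; intros x. unfold flat. destruct (Rle_dec x 0) as [|Hx].
{ rewrite Rabs_R0. pose proof (pow2_ge_0 x). split; nra. }
apply Rnot_le_lt in Hx. set (y := / x).
assert (Hy : 0 < y) by (apply Rinv_0_lt_compat; lra).
assert (Hxy : x * y = 1) by (unfold y; field; lra).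
specialize (HK y (Rlt_le _ _ Hy)).
rewrite Rabs_mult, (Rabs_pos_eq (exp _)) by (apply Rlt_le, exp_pos).
assert (Hm : 0 <= Rabs (p y) * exp (- y))
  by (apply Rmult_le_pos; [apply Rabs_pos|apply Rlt_le, exp_pos]).
split.
- assert (1 <= (1 + y) ^ 2) by nra. nra.
- assert (y ^ 2 <= (1 + y) ^ 2) by nra.
  assert (E : y ^ 2 * x ^ 2 = 1)
    by (rewrite <- Rpow_mult_distr, Rmult_comm, Hxy; apply pow1).
  replace (Rabs (p y) * exp (- y)) with (Rabs (p y) * exp (- y) * y ^ 2 * x ^ 2)
    by (rewrite Rmult_assoc, E; ring).
  apply Rmult_le_compat_r; [apply pow2_ge_0|]. nra.
Qed.

Lemma is_derive_0_of_sq_bound (f : R -> R) K :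
  f 0 = 0 -> (forall h, Rabs (f h) <= K * h ^ 2) -> is_derive f 0 0.
Proof.
intros Hf0 Hf. apply is_derive_Reals.
assert (HK : 0 <= K) by (specialize (Hf 1); pose proof (Rabs_pos (f 1)); simpl in Hf; lra).
intros eps Heps.
assert (Hd : 0 < eps / (K + 1)) by (apply Rdiv_lt_0_compat; lra).
exists (mkposreal _ Hd); intros h Hh Hhd; simpl in Hhd.
rewrite Rplus_0_l, Hf0, !Rminus_0_r.
assert (Hh0 : 0 < Rabs h) by (apply Rabs_pos_lt, Hh).
unfold Rdiv; rewrite Rabs_mult, Rabs_inv.
apply Rle_lt_trans with (K * Rabs h).
- apply Rmult_le_reg_r with (Rabs h); [lra|].
  rewrite Rmult_assoc, Rinv_l, Rmult_1_r by lra.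
  replace (K * Rabs h * Rabs h) with (K * h ^ 2) by (rewrite <- (pow2_abs h); ring).
  apply Hf.
- apply Rle_lt_trans with (K * (eps / (K + 1))); [apply Rmult_le_compat_l; lra|].
  apply Rmult_lt_reg_r with (K + 1); [lra|].
  replace (K * (eps / (K + 1)) * (K + 1)) with (K * eps) by (field; lra). nra.
Qed.

Lemma is_derive_flat p :
  is_poly p -> exists q, is_poly q /\ forall x, is_derive (flat p) x (flat q x).
Proof.
intros Hp; destruct (is_poly_derive p Hp) as [p' [Hp' Dp]].
(* (p (1/x) exp (-1/x))' = x^-2 (p - p') (1/x) exp (-1/x) *)
exists (fun y => y * y * (p y + (-1) * p' y)); split.
{ repeat constructor; assumption. }
intros x; destruct (Rtotal_order x 0) as [Hx|[->|Hx]].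
- apply is_derive_ext_loc with (fun _ => 0).
  + assert (Hd : 0 < - x) by lra. exists (mkposreal _ Hd); intros t Ht.
    change (Rabs (t - x) < - x) in Ht; apply Rabs_def2 in Ht. unfold flat.
    destruct (Rle_dec t 0); [reflexivity|lra].
  + unfold flat; destruct (Rle_dec x 0); [apply (is_derive_const 0)|lra].
- destruct (flat_bound p Hp) as [K HK].
  replace (flat _ 0) with 0 by (unfold flat; destruct (Rle_dec 0 0); [reflexivity|lra]).
  apply (is_derive_0_of_sq_bound _ K); [|intros h; apply HK].
  unfold flat; destruct (Rle_dec 0 0); [reflexivity|lra].
- apply is_derive_ext_loc with (fun t => p (/ t) * exp (- / t)).
  + exists (mkposreal _ Hx); intros t Ht.
    change (Rabs (t - x) < x) in Ht; apply Rabs_def2 in Ht. unfold flat.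
    destruct (Rle_dec t 0); [lra|reflexivity].
  + assert (Dinv : is_derive Rinv x (- / x ^ 2)).
    { replace (- / x ^ 2) with (- 1 / x ^ 2) by (field; lra).
      apply (is_derive_inv (fun t => t)); [exact (@is_derive_id R_AbsRing x)|lra]. }
    evar (l : R); assert (D : is_derive (fun t => p (/ t) * exp (- / t)) x l).
    { apply (is_derive_mult (fun t => p (/ t)) (fun t => exp (- / t))).
      - apply (is_derive_comp p Rinv); [apply Dp|exact Dinv].
      - apply (is_derive_comp exp (fun t => - / t)); [apply is_derive_exp|].
        apply (is_derive_opp Rinv), Dinv.
      - exact Rmult_comm. }
    subst l. replace (flat _ x) with (scal (- / x ^ 2) (p' (/ x)) * exp (- / x)
                            + p (/ x) * scal (- (- / x ^ 2)) (exp (- / x))); [exact D|].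
    unfold flat; destruct (Rle_dec x 0); [lra|].
    unfold scal; simpl; unfold mult; simpl. field; lra.
Qed.

Definition flat_exp : R -> R := flat (fun _ => 1).

Lemma Derive_n_flat_exp j :
  exists p, is_poly p /\ forall x, Derive_n flat_exp j x = flat p x.
Proof.
induction j as [|j [p [Hp E]]].
- exists (fun _ => 1); split; [constructor|reflexivity].
- destruct (is_derive_flat p Hp) as [q [Hq D]].
  exists q; split; [exact Hq|]. intros x; simpl.
  rewrite (Derive_ext _ _ x E). apply is_derive_unique, D.
Qed.

Lemma is_derive_Derive_n_flat_exp j x :
  is_derive (Derive_n flat_exp j) x (Derive_n flat_exp (S j) x).
Proof.
destruct (Derive_n_flat_exp j) as [p [Hp E]].
destruct (is_derive_flat p Hp) as [q [_ D]].
simpl; rewrite (Derive_ext _ _ x E), (is_derive_unique _ _ _ (D x)).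
apply is_derive_ext with (flat p); [intros t; symmetry; apply E|apply D].
Qed.

Lemma Derive_n_flat_exp_bounded j : exists K, forall x, Rabs (Derive_n flat_exp j x) <= K.
Proof.
destruct (Derive_n_flat_exp j) as [p [Hp E]]. destruct (flat_bound p Hp) as [K HK].
exists K; intros x; rewrite E; apply HK.
Qed.

Lemma flat_exp_nonpos y : y <= 0 -> flat_exp y = 0.
Proof. intros Hy; unfold flat_exp, flat; destruct (Rle_dec y 0); [reflexivity|lra]. Qed.

Lemma flat_exp_pos y : 0 < y -> 0 < flat_exp y <= 1.
Proof.
intros Hy; unfold flat_exp, flat; destruct (Rle_dec y 0); [lra|].
rewrite Rmult_1_l, <- exp_0; split; [apply exp_pos|].
apply Rlt_le, exp_increasing.
assert (0 < / y) by (apply Rinv_0_lt_compat; lra). lra.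
Qed.

Lemma flat_exp_range y : 0 <= flat_exp y <= 1.
Proof.
destruct (Rle_dec y 0) as [Hy|Hy].
- rewrite flat_exp_nonpos; lra.
- pose proof (flat_exp_pos y (Rnot_le_lt _ _ Hy)); lra.
Qed.

Lemma ex_series_geom_half : ex_series (fun n => (1 / 2) ^ n).
Proof. apply ex_series_geom; rewrite Rabs_pos_eq; lra. Qed.

Lemma Series_geom_half : Series (fun n => (1 / 2) ^ n) = 2.
Proof. rewrite Series_geom by (rewrite Rabs_pos_eq; lra). field. Qed.

Lemma ex_series_Rabs_geom_dom (u : nat -> R) K :
  (forall n, Rabs (u n) <= K * (1 / 2) ^ n) -> ex_series (fun n => Rabs (u n)).
Proof.
intros Hu.
apply (@ex_series_le R_AbsRing R_CompleteNormedModule _ (fun n => K * (1 / 2) ^ n)).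
- intros n; change (Rabs (Rabs (u n)) <= K * (1 / 2) ^ n); rewrite Rabs_Rabsolu; apply Hu.
- apply (ex_series_scal_l K (fun n => (1 / 2) ^ n)), ex_series_geom_half.
Qed.

Lemma CVU_geom_dom (u : nat -> R -> R) K c d :
  (forall n y, Rabs (u n y) <= K * (1 / 2) ^ n) ->
  CVU (fun N y => sum_f_R0 (fun n => u n y) N) (fun y => Series (fun n => u n y)) c d.
Proof.
intros Hu eps Heps.
assert (HK : 0 <= K)
  by (specialize (Hu 0%nat c); pose proof (Rabs_pos (u 0%nat c)); simpl in Hu; lra).
assert (He : 0 < eps / (K + 1)) by (apply Rdiv_lt_0_compat; lra).
destruct (pow_lt_1_zero (1 / 2) ltac:(rewrite Rabs_pos_eq; lra) _ He) as [N HN].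
exists N; intros n y Hn _.
assert (Htail : forall k, Rabs (u (S n + k)%nat y) <= (K * (1 / 2) ^ S n) * (1 / 2) ^ k).
{ intros k; rewrite Rmult_assoc, <- pow_add; apply Hu. }
rewrite (Series_incr_n _ (S n)) by
  (lia || now apply ex_series_Rabs, (ex_series_Rabs_geom_dom _ K)).
simpl pred; unfold Rminus; rewrite Rplus_comm, <- Rplus_assoc, Rplus_opp_l, Rplus_0_l.
eapply Rle_lt_trans; [apply Series_Rabs, (ex_series_Rabs_geom_dom _ _ Htail)|].
eapply Rle_lt_trans.
{ apply (Series_le _ (fun k => (K * (1 / 2) ^ S n) * (1 / 2) ^ k)).
  - intros k; split; [apply Rabs_pos|apply Htail].
  - apply (ex_series_scal_l _ _ ex_series_geom_half). }
rewrite (Series_scal_l (K * (1 / 2) ^ S n) (fun k => (1 / 2) ^ k)), Series_geom_half.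
specialize (HN n Hn); rewrite Rabs_pos_eq in HN by (apply pow_le; lra).
replace (K * (1 / 2) ^ S n * 2) with (K * (1 / 2) ^ n) by (simpl; field).
apply Rle_lt_trans with (K * (eps / (K + 1))); [apply Rmult_le_compat_l; lra|].
apply Rmult_lt_reg_r with (K + 1); [lra|].
replace (K * (eps / (K + 1)) * (K + 1)) with (K * eps) by (field; lra). nra.
Qed.

Definition shift_series (f : R -> R) (c a : nat -> R) (x : R) : R :=
  Series (fun n => c n * f (x - a n)).

Section ShiftSeries.

Variables (c a : nat -> R).
Hypothesis c_geom : forall n, Rabs (c n) <= (1 / 2) ^ n.

Lemma shift_term_bound (f : R -> R) K :
  (forall y, Rabs (f y) <= K) -> forall n x, Rabs (c n * f (x - a n)) <= K * (1 / 2) ^ n.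
Proof.
intros Hf n x; rewrite Rabs_mult, Rmult_comm.
apply Rmult_le_compat; auto using Rabs_pos.
Qed.

Lemma is_derive_shift_series (f f' : R -> R) x :
  (forall y, is_derive f y (f' y)) ->
  (exists K, forall y, Rabs (f y) <= K) -> (exists K, forall y, Rabs (f' y) <= K) ->
  is_derive (shift_series f c a) x (shift_series f' c a x).
Proof.
intros Df [K Bf] [K' Bf'].
assert (Dterm : forall n y, is_derive (fun z => c n * f (z - a n)) y (c n * f' (y - a n))).
{ intros n y. apply is_derive_scal.
  rewrite <- (Rmult_1_l (f' (y - a n))).
  apply (is_derive_comp f (fun z => z - a n)); [apply Df|].
  auto_derive; [exact I|ring]. }
apply is_derive_Reals.
apply (CVU_derivable (fun N y => sum_f_R0 (fun n => c n * f (y - a n)) N)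
                     (fun N y => sum_f_R0 (fun n => c n * f' (y - a n)) N)
                     _ _ x (mkposreal 1 Rlt_0_1)).
- apply (CVU_geom_dom _ K'), shift_term_bound, Bf'.
- intros y _. apply is_series_Reals, Series_correct, ex_series_Rabs.
  apply (ex_series_Rabs_geom_dom _ K); intros n; apply (shift_term_bound f K Bf).
- intros N y _. apply is_derive_Reals.
  induction N as [|N IH]; [apply Dterm|]. apply (is_derive_plus _ _ _ _ _ IH (Dterm _ _)).
- change (Rabs (x - x) < 1); rewrite Rminus_diag, Rabs_R0; lra.
Qed.

Lemma smooth_shift_series (psi : R -> R) :
  (forall j x, is_derive (Derive_n psi j) x (Derive_n psi (S j) x)) ->
  (forall j, exists K, forall x, Rabs (Derive_n psi j x) <= K) ->
  smooth (shift_series psi c a).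
Proof.
intros Dpsi Bpsi.
assert (E : forall j x,
  Derive_n (shift_series psi c a) j x = shift_series (Derive_n psi j) c a x).
{ induction j as [|j IH]; intros x; [reflexivity|]. simpl.
  rewrite (Derive_ext _ _ x IH).
  apply is_derive_unique, (is_derive_shift_series _ (Derive_n psi (S j)));
    [apply Dpsi|apply Bpsi..]. }
intros [|j] x; [exact I|]. simpl.
apply (ex_derive_ext (shift_series (Derive_n psi j) c a)); [intros y; symmetry; apply E|].
eexists; apply (is_derive_shift_series _ (Derive_n psi (S j)));
  [apply Dpsi|apply Bpsi..].
Qed.

End ShiftSeries.

Lemma Series_nonneg (u : nat -> R) : (forall k, 0 <= u k) -> ex_series u -> 0 <= Series u.
Proof.
intros Hu Hex. replace 0 with (Series (fun k => 0 * u k)) by (rewrite Series_scal_l; ring).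
apply Series_le; [intros k; rewrite Rmult_0_l; split; [lra|apply Hu]|exact Hex].
Qed.

Lemma Series_ge_term (u : nat -> R) n :
  (forall k, 0 <= u k) -> ex_series u -> u n <= Series u.
Proof.
intros Hu Hex. rewrite (Series_incr_n u (S n)) by (lia || exact Hex). simpl pred.
assert (0 <= Series (fun k => u (S n + k)%nat)).
{ apply Series_nonneg; [intros k; apply Hu|].
  now apply (ex_series_incr_n u (S n)) in Hex. }
destruct n as [|n]; simpl sum_f_R0; [lra|].
pose proof (cond_pos_sum u n Hu). lra.
Qed.

Section NonnegShiftSeries.

Variables (psi : R -> R) (c a : nat -> R).
Hypothesis psi_range : forall y, 0 <= psi y <= 1.
Hypothesis psi_nonpos : forall y, y <= 0 -> psi y = 0.
Hypothesis c_range : forall n, 0 <= c n <= (1 / 2) ^ n.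

Lemma shift_term_range x n : 0 <= c n * psi (x - a n) <= (1 / 2) ^ n.
Proof. pose proof (psi_range (x - a n)); pose proof (c_range n); split; nra. Qed.

Lemma ex_series_shift x : ex_series (fun n => c n * psi (x - a n)).
Proof.
apply ex_series_Rabs, (ex_series_Rabs_geom_dom _ 1); intros n.
rewrite Rmult_1_l, Rabs_pos_eq; apply shift_term_range.
Qed.

Lemma shift_series_ge_term x n : c n * psi (x - a n) <= shift_series psi c a x.
Proof.
apply (Series_ge_term (fun k => c k * psi (x - a k)));
  [intros k; apply shift_term_range|apply ex_series_shift].
Qed.

Lemma shift_series_nonneg x : 0 <= shift_series psi c a x.
Proof. eapply Rle_trans; [apply (shift_term_range x 0)|apply shift_series_ge_term]. Qed.

Lemma shift_series_nonpos x : (forall n, 0 <= a n) -> x <= 0 -> shift_series psi c a x = 0.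
Proof.
intros Ha Hx. unfold shift_series.
rewrite (Series_ext _ (fun n => 0 * c n)), Series_scal_l; [ring|].
intros n; rewrite psi_nonpos; [ring|]. specialize (Ha n); lra.
Qed.

Lemma shift_series_le x B :
  (forall n, a n < x -> c n <= B * (1 / 2) ^ n) -> 0 <= B -> shift_series psi c a x <= 2 * B.
Proof.
intros Hc HB.
replace (2 * B) with (Series (fun n => B * (1 / 2) ^ n))
  by (rewrite (Series_scal_l B (fun n => (1 / 2) ^ n)), Series_geom_half; ring).
apply Series_le.
- intros n; split; [apply shift_term_range|].
  destruct (Rlt_dec (a n) x) as [Hlt|Hge].
  + pose proof (psi_range (x - a n)); pose proof (c_range n); specialize (Hc n Hlt); nra.
  + rewrite psi_nonpos by lra. rewrite Rmult_0_r.
    apply Rmult_le_pos; [exact HB|apply pow_le; lra].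
- apply (ex_series_scal_l B (fun n => (1 / 2) ^ n)), ex_series_geom_half.
Qed.

End NonnegShiftSeries.

Lemma filterlim_at_right_0_of_linear_bound (g : R -> R) C d :
  0 < d -> (forall x, 0 < x < d -> 0 <= g x <= C * x) ->
  filterlim g (at_right 0) (locally 0).
Proof.
intros Hd Hg.
apply (filterlim_le_le (fun _ => 0) g (fun x => C * x) 0).
- exists (mkposreal d Hd); intros x Hx Hx0. apply Hg.
  change (Rabs (x - 0) < d) in Hx. rewrite Rminus_0_r, Rabs_pos_eq in Hx; lra.
- apply filterlim_const.
- eapply filterlim_filter_le_1; [apply (filter_le_within (F := locally 0))|].
  change (Rbar_locally 0) with (locally 0). rewrite <- (Rmult_0_r C) at 2.
  apply (continuous_mult (fun _ => C) (fun x => x));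
    [apply continuous_const|apply continuous_id].
Qed.

Lemma pow_le_pow_le1 b k n : 0 <= b <= 1 -> (k <= n)%nat -> b ^ n <= b ^ k.
Proof.
intros Hb Hkn; induction Hkn as [|n _ IH]; [lra|].
simpl; pose proof (pow_le b n (proj1 Hb)); nra.
Qed.

Lemma prod_f_R0_pos (f : nat -> R) n :
  (forall t, (t <= n)%nat -> 0 < f t) -> 0 < prod_f_R0 f n.
Proof.
induction n as [|n IH]; intros Hf; simpl; [apply Hf; lia|].
apply Rmult_lt_0_compat; [apply IH; intros t Ht|]; apply Hf; lia.
Qed.

Lemma prod_f_R0_le_factor (f : nat -> R) n t :
  (forall s, (s <= n)%nat -> 0 <= f s <= 1) -> (t <= n)%nat -> prod_f_R0 f n <= f t.
Proof.
revert t; induction n as [|n IH]; intros t Hf Ht; simpl.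
- replace t with 0%nat by lia; lra.
- assert (Hprod : 0 <= prod_f_R0 f n) by (apply prod_SO_pos; intros s Hs; apply Hf; lia).
  destruct (Nat.eq_dec t (S n)) as [->|Hne].
  + assert (prod_f_R0 f n <= f 0%nat) by (apply IH; [intros s Hs; apply Hf|]; lia).
    pose proof (Hf 0%nat ltac:(lia)); pose proof (Hf (S n) (le_n _)); nra.
  + assert (prod_f_R0 f n <= f t) by (apply IH; [intros s Hs; apply Hf|]; lia).
    pose proof (Hf (S n) (le_n _)); nra.
Qed.

Definition knot (n : nat) : R := / (INR n + 1).

Lemma knot_range n : 0 < knot n <= 1.
Proof.
unfold knot; pose proof (pos_INR n); split; [apply Rinv_0_lt_compat; lra|].
rewrite <- Rinv_1; apply Rinv_le_contravar; lra.
Qed.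

Lemma knot_lt_knot m n : knot n < knot m -> (m < n)%nat.
Proof.
intros H; destruct (Nat.lt_ge_cases m n) as [|Hnm]; [assumption|exfalso].
apply le_INR in Hnm; pose proof (pos_INR n).
assert (knot m <= knot n) by (apply Rinv_le_contravar; lra). lra.
Qed.

Lemma exists_knot_lt x : 0 < x -> exists n, knot n < x.
Proof.
intros Hx; destruct (archimed_cor1 x Hx) as [n [Hn Hn0]]; exists n.
apply Rle_lt_trans with (/ INR n); [|exact Hn].
apply lt_0_INR in Hn0; apply Rinv_le_contravar; lra.
Qed.

Section Weights.

Variable alpha_ : nat -> R -> R.
Hypothesis alpha_mono : forall t x y, 0 <= x -> x <= y -> alpha_ t x <= alpha_ t y.
Hypothesis alpha_pos : forall t x, 0 < x -> 0 < alpha_ t x.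

Definition level (n : nat) : R := prod_f_R0 (fun t => Rmin 1 (alpha_ t (knot n))) n.

Definition weight (n : nat) : R := (1 / 2) ^ n * knot n * level n ^ n.

Lemma min_alpha_range t n : 0 <= Rmin 1 (alpha_ t (knot n)) <= 1.
Proof.
split; [apply Rmin_glb; [lra|apply Rlt_le, alpha_pos, knot_range]|apply Rmin_l].
Qed.

Lemma level_range n : 0 < level n <= 1.
Proof.
split.
- apply prod_f_R0_pos; intros t _.
  apply Rmin_glb_lt; [lra|apply alpha_pos, knot_range].
- eapply Rle_trans; [apply (prod_f_R0_le_factor _ n 0)|apply min_alpha_range];
    [intros s _; apply min_alpha_range|lia].
Qed.

Lemma weight_range n : 0 < weight n <= (1 / 2) ^ n.
Proof.
unfold weight; pose proof (level_range n) as [Hl0 Hl1]; pose proof (knot_range n).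
assert (Hh : 0 < (1 / 2) ^ n) by (apply pow_lt; lra).
assert (0 < level n ^ n <= 1).
{ split; [now apply pow_lt|].
  apply Rle_trans with (level n ^ 0); [apply pow_le_pow_le1; [lra|lia]|simpl; lra]. }
split; [apply Rmult_lt_0_compat; [apply Rmult_lt_0_compat|]; lra|].
assert (knot n * level n ^ n <= 1) by nra. nra.
Qed.

Lemma weight_le x t k n :
  (t <= n)%nat -> (k <= n)%nat -> knot n <= x -> weight n <= x * alpha_ t x ^ k * (1 / 2) ^ n.
Proof.
intros Htn Hkn Hx. pose proof (level_range n); pose proof (knot_range n).
assert (Hlevel : level n <= alpha_ t (knot n)).
{ eapply Rle_trans; [apply (prod_f_R0_le_factor _ n t)|apply Rmin_r];
    [intros s _; apply min_alpha_range|exact Htn]. }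
assert (Hpow : level n ^ n <= alpha_ t x ^ k).
{ apply Rle_trans with (level n ^ k); [apply pow_le_pow_le1; [lra|exact Hkn]|].
  apply pow_incr; split; [lra|].
  apply Rle_trans with (alpha_ t (knot n)); [exact Hlevel|apply alpha_mono; lra]. }
assert (0 <= level n ^ n) by (apply pow_le; lra).
assert (0 < (1 / 2) ^ n) by (apply pow_lt; lra).
unfold weight.
replace (x * alpha_ t x ^ k * (1 / 2) ^ n) with ((1 / 2) ^ n * x * alpha_ t x ^ k) by ring.
apply Rmult_le_compat; [|lra|apply Rmult_le_compat_l; lra|exact Hpow].
apply Rmult_le_pos; lra.
Qed.

Definition bump : R -> R := shift_series flat_exp weight knot.

Lemma weight_geom n : 0 <= weight n <= (1 / 2) ^ n.
Proof. pose proof (weight_range n); lra. Qed.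

Lemma bump_smooth : smooth bump.
Proof.
apply smooth_shift_series.
- intros n; rewrite Rabs_pos_eq; apply weight_geom.
- apply is_derive_Derive_n_flat_exp.
- apply Derive_n_flat_exp_bounded.
Qed.

Lemma bump_nonneg x : 0 <= bump x.
Proof. apply shift_series_nonneg; [apply flat_exp_range|apply weight_geom]. Qed.

Lemma bump_eq0 x : bump x = 0 <-> x <= 0.
Proof.
split; intros Hx.
- destruct (Rle_dec x 0) as [|Hpos]; [assumption|exfalso].
  destruct (exists_knot_lt x (Rnot_le_lt _ _ Hpos)) as [n Hn].
  assert (0 < weight n * flat_exp (x - knot n)).
  { apply Rmult_lt_0_compat; [apply weight_range|apply flat_exp_pos; lra]. }
  pose proof (shift_series_ge_term flat_exp weight knot flat_exp_range weight_geom x n).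
  unfold bump in Hx; lra.
- apply shift_series_nonpos; [apply flat_exp_nonpos| |exact Hx].
  intros n; apply Rlt_le, knot_range.
Qed.

Lemma bump_le t k x : 0 < x -> x < knot (t + k) -> bump x <= 2 * (x * alpha_ t x ^ k).
Proof.
intros Hx0 Hx.
apply shift_series_le; [apply flat_exp_range|apply flat_exp_nonpos|apply weight_geom| |].
- intros n Hn. pose proof (knot_lt_knot (t + k) n ltac:(lra)).
  apply weight_le; lia || lra.
- apply Rmult_le_pos; [lra|apply pow_le, Rlt_le, alpha_pos, Hx0].
Qed.

Lemma bump_div_pow_alpha_lim t k :
  filterlim (fun x => bump x / alpha_ t x ^ k) (at_right 0) (locally 0).
Proof.
apply (filterlim_at_right_0_of_linear_bound _ 2 (knot (t + k))); [apply knot_range|].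
intros x [Hx0 Hx]. assert (HA : 0 < alpha_ t x ^ k) by (apply pow_lt, alpha_pos, Hx0).
split; [apply Rdiv_le_0_compat; [apply bump_nonneg|exact HA]|].
apply Rmult_le_reg_r with (alpha_ t x ^ k); [exact HA|].
unfold Rdiv; rewrite Rmult_assoc, Rinv_l, Rmult_1_r by lra.
pose proof (bump_le t k x Hx0 Hx); lra.
Qed.

End Weights.

Theorem propositionA1
  (alpha_ : nat -> R -> R)
  (Hcont : forall t : nat, continuous_on_nonneg (alpha_ t))
  (Hmono : forall (t : nat) (x y : R), 0 <= x -> x <= y -> alpha_ t x <= alpha_ t y)
  (Hnonneg : forall (t : nat) (x : R), 0 <= x -> 0 <= alpha_ t x)
  (Hzero : forall (t : nat) (x : R), 0 <= x -> (alpha_ t x = 0 <-> x = 0)) :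
  exists alpha : R -> R,
    smooth alpha /\
    (forall x : R, 0 <= alpha x) /\
    (forall x : R, alpha x = 0 <-> x <= 0) /\
    (forall t k : nat,
       filterlim (fun x => alpha x / (alpha_ t x) ^ k) (at_right 0) (locally 0)).
Proof.
assert (Hpos : forall t x, 0 < x -> 0 < alpha_ t x).
{ intros t x Hx. destruct (Hnonneg t x (Rlt_le _ _ Hx)) as [|H]; [assumption|].
  symmetry in H; apply (Hzero t x (Rlt_le _ _ Hx)) in H; lra. }
exists (bump alpha_).
split; [|split; [|split]].
- apply bump_smooth, Hpos.
- apply bump_nonneg, Hpos.
- apply bump_eq0, Hpos.
- apply bump_div_pow_alpha_lim; assumption.
Qed.
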